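(* Let $(P,\epsilon)$ be a labeled poset and let $n$ be a non-negative integer such that $\Omega(P,\epsilon;n)\ne0$. If $\Omega(P,-\epsilon;n+r(\epsilon))=\Omega(P,\epsilon;n)$, then $\epsilon$ satisfies the $\lambda$-chain condition.
   Context: $P$ is a finite poset with $p$ elements, $\omega:P\to\{1,\dots,p\}$ a bijection; write $x\prec y$ if $y$ covers $x$, and $\epsilon(x,y)=1$ if $\omega(x)<\omega(y)$, $-1$ otherwise; $-\epsilon$ is defined by $(-\epsilon)(x,y)=-\epsilon(x,y)$ (induced by the labeling $p+1-\omega$). A $(P,\epsilon)$-partition is an order-reversing map $\sigma:P\to\{1,2,\dots\}$ with $\sigma(x)>\sigma(y)$ whenever $x\prec y$ and $\epsilon(x,y)=-1$; $\Omega(P,\epsilon;n)$ is the number of $(P,\epsilon)$-partitions with largest part at most $n$. $r(\epsilon)=\max\sum_{i=1}^\ell\epsilon(x_{i-1},x_i)$ over all maximal chains $x_0\prec\cdots\prec x_\ell$ of $P$. $\epsilon$ satisfies the $\lambda$-chain condition if every $x\in P$ lies on some maximal chain $x_0\prec\cdots\prec x_\ell$ with $\sum_{i=1}^\ell\epsilon(x_{i-1},x_i)=r(\epsilon)$. *)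

From HB Require Import structures.
From mathcomp Require Import all_boot all_order all_algebra.
Set Implicit Arguments. Unset Strict Implicit. Unset Printing Implicit Defensive.
Import Order.TTheory GRing.Theory Num.Theory.

Section LabeledPoset.
Variables (d : Order.disp_t) (T : finPOrderType d).

Definition covers (x y : T) : bool :=
  ((x < y)%O && [forall z : T, ~~ ((x < z)%O && (z < y)%O)]).

(* epsilon induced by a labeling omega : T -> 'I_#|T| (labels 0..p-1
   instead of 1..p; only comparisons matter) *)
Definition eps (omega : T -> 'I_#|T|) (x y : T) : int :=
  if (omega x < omega y)%N then 1%R else (-1)%R.

Definition neg_eps (e : T -> T -> int) (x y : T) : int := (- e x y)%R.

Definition is_partition (e : T -> T -> int) (sigma : T -> nat) : bool :=
  [forall x, 0 < sigma x]%N &&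
  [forall x, forall y, (x <= y)%O ==> (sigma y <= sigma x)%N] &&
  [forall x, forall y, (covers x y && (e x y == (-1)%R)) ==> (sigma y < sigma x)%N].

(* Omega(P,e;m): number of (P,e)-partitions with largest part at most m
   (m : int; no partitions counted when m < 0) *)
Definition Omega (e : T -> T -> int) (m : int) : nat :=
  #|[set f : {ffun T -> 'I_`|m|%N} |
      ((0 <= m)%R && is_partition e (fun x => (f x).+1))]|.

Definition minimal (x : T) : bool := [forall y : T, ~~ (y < x)%O].
Definition maximal (x : T) : bool := [forall y : T, ~~ (x < y)%O].

Definition maxchain (x0 : T) (s : seq T) : bool :=
  [&& path covers x0 s, minimal x0 & maximal (last x0 s)].

Fixpoint weight (e : T -> T -> int) (x0 : T) (s : seq T) : int :=
  match s with
  | [::] => 0%R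
  | y :: s' => (e x0 y + weight e y s')%R
  end.

Definition is_r (e : T -> T -> int) (r : int) : Prop :=
  (exists x0 s, maxchain x0 s /\ weight e x0 s = r) /\
  (forall x0 s, maxchain x0 s -> (weight e x0 s <= r)%R).

Definition lambda_chain (e : T -> T -> int) (r : int) : Prop :=
  forall x : T, exists x0 s, [/\ maxchain x0 s, x \in x0 :: s & weight e x0 s = r].

End LabeledPoset.

From mathcomp Require Import all_boot all_order all_algebra zify.
From Stdlib Require Import Classical.
Set Implicit Arguments. Unset Strict Implicit. Unset Printing Implicit Defensive.
Import Order.TTheory GRing.Theory Num.Theory.

(* Let h x be the largest weight of a saturated chain from a minimal element
   up to x, and g x the largest weight of one from x up to a maximal element,
   so that g x + h x <= r with equality exactly when x lies on a maximal chain
   of weight r.  Call k : P -> Z admissible when k y + e x y <= k x for every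
   cover x < y, k >= 0 on maximal and k <= r on minimal elements; both r - h
   and g are admissible.  Adding an admissible k to a (P,e)-partition with
   parts <= n injectively yields a (P,-e)-partition with parts <= n + r.  When
   the two counts agree this injection is onto, so for a second admissible k'
   each sigma + k' equals some sigma' + k; taking sigma with sigma x minimal
   forces k x <= k' x.  Hence admissible functions are unique, g = r - h, and
   every x lies on a maximal chain of weight r. *)

Lemma fin_wf_ind (T : finType) (R : rel T) :
  irreflexive R -> transitive R ->
  forall P : T -> Prop, (forall x, (forall y, R y x -> P y) -> P x) -> forall x, P x.
Proof.
move=> Rirr Rtr P IH x; move Ex: #|[set y | R y x]| => m.
elim/ltn_ind: m x Ex => m IHm x Ex; apply: IH => y yx.
apply: (IHm _ _ y erefl); rewrite -Ex; apply: proper_card; apply/properP; split.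
- by apply/subsetP => z; rewrite !inE => /Rtr; apply.
- by exists y; rewrite !inE ?yx ?Rirr.
Qed.

Section FinitePoset.
Variables (d : Order.disp_t) (T : finPOrderType d).
Local Open Scope order_scope.
Local Notation covers := (@covers _ T).

Lemma lt_wf_ind (P : T -> Prop) :
  (forall x, (forall y, y < x -> P y) -> P x) -> forall x, P x.
Proof. exact: fin_wf_ind ltxx lt_trans P. Qed.

Lemma gt_wf_ind (P : T -> Prop) :
  (forall x, (forall y, x < y -> P y) -> P x) -> forall x, P x.
Proof.
apply: (fin_wf_ind (R := fun x y => y < x)) => [x|y x z xy zy]; first exact: ltxx.
exact: lt_trans zy xy.
Qed.

Lemma covers_lt (x y : T) : covers x y -> x < y.
Proof. by case/andP. Qed.

Lemma exists_covers_above (x y : T) : x < y -> exists2 z, covers x z & z <= y.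
Proof.
elim/lt_wf_ind: y => y IH xy.
have [cxy | ] := boolP (covers x y); first by exists y.
rewrite /covers xy => /forallPn [w]; rewrite negbK => /andP [xw wy].
by have [z cxz zw] := IH w wy xw; exists z => //; apply: le_trans zw (ltW wy).
Qed.

Lemma chain_between (x y : T) : x <= y -> exists2 s, path covers x s & last x s = y.
Proof.
elim/gt_wf_ind: x => x IH; rewrite le_eqVlt => /predU1P [<- | xy]; first by exists [::].
have [z cxz zy] := exists_covers_above xy.
by have [s zs <-] := IH z (covers_lt cxz) zy; exists (z :: s); rewrite /= ?cxz.
Qed.

Lemma le_covers_ind (R : T -> T -> Prop) :
  (forall x, R x x) -> (forall x y z, R x y -> R y z -> R x z) ->
  (forall x y, covers x y -> R x y) -> forall x y, x <= y -> R x y.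
Proof.
move=> Rrefl Rtr Rcov x _ /chain_between [s + <-].
elim: s x => [|y s IH] x //= /andP [cxy ys].
exact: Rtr (Rcov _ _ cxy) (IH _ ys).
Qed.

Lemma exists_minimal_below (x : T) : exists2 m, minimal m & m <= x.
Proof.
elim/lt_wf_ind: x => x IH; have [|] := boolP (minimal x); first by exists x.
case/forallPn => w; rewrite negbK => wx.
by have [m mm mw] := IH w wx; exists m => //; apply: le_trans mw (ltW wx).
Qed.

Lemma exists_maximal_above (x : T) : exists2 m, maximal m & x <= m.
Proof.
elim/gt_wf_ind: x => x IH; have [|] := boolP (maximal x); first by exists x.
case/forallPn => w; rewrite negbK => xw.
by have [m mm wm] := IH w xw; exists m => //; apply: le_trans (ltW xw) wm.
Qed.

Lemma size_covers_path (x : T) s : path covers x s -> (size s < #|T|)%N.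
Proof.
move=> xs; have : sorted <%O (x :: s) by apply: sub_path xs => a b /covers_lt.
by move/lt_sorted_uniq/card_uniqP => /= <-; apply: max_card.
Qed.

End FinitePoset.

Lemma is_partitionP (d : Order.disp_t) (T : finPOrderType d) (e : T -> T -> int)
    (sigma : T -> nat) :
  reflect [/\ forall x, (0 < sigma x)%N,
              forall x y, (x <= y)%O -> (sigma y <= sigma x)%N &
              forall x y, covers x y -> e x y = (-1)%R -> (sigma y < sigma x)%N]
          (is_partition e sigma).
Proof.
apply: (iffP idP) => [|[pos anti strict]].
  case/andP => /andP [/forallP pos /forallP anti] /forallP strict.
  split=> // x y; first by move: (anti x) => /forallP/(_ y)/implyP.
  by move=> cxy exy; move: (strict x) => /forallP/(_ y)/implyP; apply; rewrite cxy exy eqxx.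
apply/andP; split; first (apply/andP; split); apply/forallP => x //; apply/forallP => y.
  by apply/implyP; apply: anti.
by apply/implyP => /andP [cxy /eqP]; apply: strict.
Qed.

Lemma int_has_max (P : int -> Prop) (b : int) :
  (exists k, P k) -> (forall k, P k -> (k <= b)%R) ->
  exists2 m, P m & forall k, P k -> (k <= m)%R.
Proof.
move=> [k Pk] Pb; move Ek: `|b - k|%N => m.
elim/ltn_ind: m k Pk Ek => m IH k Pk Ek.
case: (classic (exists2 j, P j & (k < j)%R)) => [[j Pj kj] | nomore].
  by apply: (IH _ _ j Pj erefl); have := Pb _ Pj; lia.
exists k => // j Pj; rewrite leNgt; apply/negP => kj; by apply: nomore; exists j.
Qed.

Section ChainWeights.
Variables (d : Order.disp_t) (T : finPOrderType d) (e : T -> T -> int).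
Local Notation covers := (@covers _ T).
Local Open Scope ring_scope.

Lemma weight_cat x0 s1 s2 :
  weight e x0 (s1 ++ s2) = weight e x0 s1 + weight e (last x0 s1) s2.
Proof. by elim: s1 x0 => [|y s1 IH] x0 /=; rewrite ?add0r // IH addrA. Qed.

Definition lower_weight (x : T) (w : int) : Prop := exists x0 s,
  [/\ path covers x0 s, minimal x0, last x0 s = x & weight e x0 s = w].

Definition upper_weight (x : T) (w : int) : Prop := exists s,
  [/\ path covers x s, maximal (last x s) & weight e x s = w].

Hypothesis e_le1 : forall x y, e x y <= 1.

Lemma weight_le_size x0 s : weight e x0 s <= (size s)%:Z.
Proof. by elim: s x0 => [|y s IH] x0 //=; have := e_le1 x0 y; have := IH y; lia. Qed.

Lemma exists_max_weight (W : T -> int -> Prop) :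
  (forall x, exists w, W x w) ->
  (forall x w, W x w -> exists x0 s, path covers x0 s /\ weight e x0 s = w) ->
  exists2 f : T -> int, forall x, W x (f x) & forall x w, W x w -> w <= f x.
Proof.
move=> Wne Wchain.
suff /fin_all_exists2 [f Wf fmax] : forall x, exists2 w, W x w & forall v, W x v -> v <= w.
  by exists f.
move=> x; apply: (int_has_max (b := #|T|%:Z)) => // w.
case/Wchain => x0 [s [xs <-]]; have := weight_le_size x0 s; have := size_covers_path xs; lia.
Qed.

Lemma exists_max_lower_weight :
  exists2 h : T -> int, forall x, lower_weight x (h x) & forall x w, lower_weight x w -> w <= h x.
Proof.
apply: exists_max_weight => [x | x w [x0 [s [xs _ _ <-]]]]; last by exists x0, s.
have [m mm mx] := exists_minimal_below x; have [s ms sx] := chain_between mx.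
by exists (weight e m s), m, s.
Qed.

Lemma exists_max_upper_weight :
  exists2 g : T -> int, forall x, upper_weight x (g x) & forall x w, upper_weight x w -> w <= g x.
Proof.
apply: exists_max_weight => [x | x w [s [xs _ <-]]]; last by exists x, s.
have [m mm xm] := exists_maximal_above x; have [s xs sm] := chain_between xm.
by exists (weight e x s), s; rewrite sm.
Qed.

End ChainWeights.

Section AdmissibleShift.
Variables (d : Order.disp_t) (T : finPOrderType d) (e : T -> T -> int) (r : int).
Local Notation covers := (@covers _ T).
Local Open Scope ring_scope.

Definition admissible_shift (k : T -> int) : Prop :=
  [/\ forall x y, covers x y -> k y + e x y <= k x,
      forall x, maximal x -> 0 <= k x &
      forall x, minimal x -> k x <= r].

Hypothesis r_ub : forall x0 s, maxchain x0 s -> weight e x0 s <= r.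

Section ExtremalWeights.
Variable h : T -> int.
Hypotheses (h_lower : forall x, lower_weight e x (h x))
           (h_max : forall x w, lower_weight e x w -> w <= h x).

Lemma admissible_shift_lower : admissible_shift (fun x => r - h x).
Proof.
split=> [x y cxy | x xmax | x xmin].
- have [x0 [s [x0s x0min sx <-]]] := h_lower x.
  suff : weight e x0 s + e x y <= h y by lia.
  apply: h_max; exists x0, (rcons s y); split.
  + by rewrite rcons_path x0s sx.
  + exact: x0min.
  + by rewrite last_rcons.
  + by rewrite -cats1 weight_cat sx /= addr0.
- have [x0 [s [x0s x0min sx <-]]] := h_lower x.
  by rewrite subr_ge0 r_ub // /maxchain x0s x0min sx.
- by rewrite lerBlDr lerDl; apply: h_max; exists x, [::].
Qed.

Variable g : T -> int.
Hypotheses (g_upper : forall x, upper_weight e x (g x))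
           (g_max : forall x w, upper_weight e x w -> w <= g x).

Lemma admissible_shift_upper : admissible_shift g.
Proof.
split=> [x y cxy | x xmax | x xmin].
- have [s [ys smax <-]] := g_upper y; rewrite addrC.
  by apply: g_max; exists (y :: s); split; rewrite //= cxy.
- by apply: g_max; exists [::].
- by have [s [xs smax <-]] := g_upper x; apply: r_ub; rewrite /maxchain xs xmin.
Qed.

Lemma on_optimal_chain x : g x + h x = r ->
  exists x0 s, [/\ maxchain x0 s, x \in x0 :: s & weight e x0 s = r].
Proof.
have [x0 [s [x0s x0min sx <-]]] := h_lower x; have [s' [xs' s'max <-]] := g_upper x.
move=> opt; exists x0, (s ++ s'); split.
- by rewrite /maxchain cat_path x0s sx xs' x0min last_cat sx.
- by rewrite -cat_cons mem_cat -sx mem_last.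
- by rewrite weight_cat sx addrC.
Qed.

End ExtremalWeights.
End AdmissibleShift.

Section ShiftPartition.
Variables (d : Order.disp_t) (T : finPOrderType d) (e : T -> T -> int) (r : int).
Variables (k : T -> int) (n : nat) (sigma : T -> nat).
Local Notation covers := (@covers _ T).
Local Open Scope ring_scope.
Hypotheses (e_pm1 : forall x y, e x y = 1 \/ e x y = -1)
           (k_adm : admissible_shift e r k)
           (sigma_part : is_partition e sigma) (sigma_le : forall x, (sigma x <= n)%N).

Let tau x : int := (sigma x)%:Z + k x.

Lemma shift_covers x y : covers x y -> tau y + (e x y == 1)%:Z <= tau x.
Proof.
move=> cxy; case: k_adm => k_cov _ _; have := k_cov x y cxy.
case/is_partitionP: sigma_part => _ /(_ x y (ltW (covers_lt cxy))) + /(_ x y cxy).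
by rewrite /tau; case: (e_pm1 x y) => -> /=; [|move=> ? /(_ erefl)]; lia.
Qed.

Lemma shift_antitone x y : (x <= y)%O -> tau y <= tau x.
Proof.
apply: (le_covers_ind (R := fun x y => tau y <= tau x)) => // [a b c ba cb | a b /shift_covers].
  exact: le_trans cb ba.
lia.
Qed.

Lemma shift_bounds x : 1 <= tau x <= n%:Z + r.
Proof.
case: k_adm => _ k_max k_min; case/is_partitionP: sigma_part => sigma_pos _ _.
have [M Mmax xM] := exists_maximal_above x; have [m mmin mx] := exists_minimal_below x.
have := shift_antitone xM; have := shift_antitone mx; have := k_max M Mmax.
have := k_min m mmin; have := sigma_pos M; have := sigma_le m; rewrite /tau; lia.
Qed.

Lemma is_partition_shift (tau' : T -> nat) :
  (forall x, tau' x = tau x :> int) -> is_partition (neg_eps e) tau'.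
Proof.
move=> tauE; apply/is_partitionP; split=> [x | x y /shift_antitone | x y /shift_covers].
- by have := shift_bounds x; rewrite -tauE; lia.
- by rewrite -!tauE; lia.
by rewrite /neg_eps -!tauE; case: (e_pm1 x y) => -> //=; lia.
Qed.

End ShiftPartition.

Section CountingShifts.
Variables (d : Order.disp_t) (T : finPOrderType d) (e : T -> T -> int) (r : int) (n : nat).
Local Open Scope ring_scope.
Hypothesis e_pm1 : forall x y, e x y = 1 \/ e x y = -1.

Definition partitions (e' : T -> T -> int) (m : nat) : {set {ffun T -> 'I_m}} :=
  [set f : {ffun T -> 'I_m} | is_partition e' (fun x => (f x).+1)].

Lemma OmegaE (e' : T -> T -> int) (m : int) :
  0 <= m -> Omega e' m = #|partitions e' `|m|%N|.
Proof. by move=> m_ge0; rewrite /Omega m_ge0. Qed.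

Definition shift_ffun (k : T -> int) (M : nat) (f : {ffun T -> 'I_n}) : {ffun T -> 'I_M.+1} :=
  [ffun x => inord (absz ((f x)%:Z + k x))].

Section FixedShift.
Variables (k : T -> int) (M : nat).
Hypotheses (k_adm : admissible_shift e r k) (nrM : n%:Z + r = M.+1%:Z).

Lemma shift_ffunE f x : f \in partitions e n -> (shift_ffun k M f x : int) = (f x)%:Z + k x.
Proof.
rewrite inE => /(shift_bounds e_pm1 k_adm) /(_ (fun y => ltn_ord (f y)) x) /andP [/= lo hi].
by rewrite ffunE inordK; lia.
Qed.

Lemma shift_ffun_partition f :
  f \in partitions e n -> shift_ffun k M f \in partitions (neg_eps e) M.+1.
Proof.
move=> f_part; rewrite inE; move: (f_part); rewrite inE => /(is_partition_shift e_pm1 k_adm).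
apply=> [y | x /=]; first exact: ltn_ord.
by rewrite !intS shift_ffunE // addrA.
Qed.

Lemma shift_ffun_inj : {in partitions e n &, injective (shift_ffun k M)}.
Proof.
move=> f f' f_part f'_part ff'; apply/ffunP => x; apply/ord_inj.
by have := shift_ffunE x f_part; rewrite ff' shift_ffunE // => /addIr [->].
Qed.

End FixedShift.

Hypotheses (Omega_nz : Omega e n%:Z <> 0%N)
           (Omega_le : (Omega (neg_eps e) (n%:Z + r) <= Omega e n%:Z)%N).

Lemma admissible_shift_le (k1 k2 : T -> int) :
  admissible_shift e r k1 -> admissible_shift e r k2 -> forall x, k1 x <= k2 x.
Proof.
move=> k1_adm k2_adm x; rewrite leNgt; apply/negP => k21.
have /set0Pn [f0 f0_part] : partitions e n != set0.
  by rewrite -card_gt0 lt0n; apply/eqP; move: Omega_nz; rewrite OmegaE.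
have [f f_part f_min] : exists2 f, f \in partitions e n &
    forall f', f' \in partitions e n -> (f x <= f' x)%N.
  by case: (arg_minnP (fun f : {ffun T -> 'I_n} => nat_of_ord (f x)) f0_part) => f; exists f.
have [M nrM] : exists M, n%:Z + r = M.+1%:Z.
  move: f_part; rewrite inE => /(shift_bounds e_pm1 k1_adm) /(_ (fun y => ltn_ord (f y)) x).
  case/andP => /= lo hi.
  by exists `|n%:Z + r|.-1; have /= := ltn_ord (f x); lia.
have card_le : (#|partitions (neg_eps e) M.+1| <= #|partitions e n|)%N.
  by move: Omega_le; rewrite !OmegaE ?nrM //; lia.
have onto : shift_ffun k1 M @: partitions e n = partitions (neg_eps e) M.+1.
  apply/eqP; rewrite eqEcard card_in_imset ?card_le ?andbT.
    by apply/subsetP => _ /imsetP [g g_part ->]; exact: shift_ffun_partition k1_adm nrM _ g_part.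
  exact: shift_ffun_inj k1_adm nrM.
have /imsetP [f' f'_part ff'] : shift_ffun k2 M f \in shift_ffun k1 M @: partitions e n.
  by rewrite onto (shift_ffun_partition k2_adm nrM).
have := f_min f' f'_part; have := shift_ffunE k1_adm nrM x f'_part.
by rewrite -ff' (shift_ffunE k2_adm nrM _ f_part); lia.
Qed.

Lemma admissible_shift_unique (k1 k2 : T -> int) :
  admissible_shift e r k1 -> admissible_shift e r k2 -> k1 =1 k2.
Proof.
by move=> k1_adm k2_adm x; apply/eqP; rewrite eq_le !admissible_shift_le.
Qed.

End CountingShifts.

Theorem lemma7p2 (d : Order.disp_t) (T : finPOrderType d)
  (omega : T -> 'I_#|T|) (omega_bij : bijective omega)
  (n : nat) (r : int) (hr : is_r (eps omega) r)
  (hnz : Omega (eps omega) n%:Z <> 0%N)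
  (heq : Omega (neg_eps (eps omega)) (n%:Z + r)%R = Omega (eps omega) n%:Z) :
  lambda_chain (eps omega) r.
Proof.
set e := eps omega in hr hnz heq *; have [_ r_ub] := hr.
have e_pm1 x y : e x y = 1%R \/ e x y = (-1)%R.
  by rewrite /e /eps; case: ifP; [left | right].
have e_le1 x y : (e x y <= 1)%R by case: (e_pm1 x y) => ->.
have [h h_lower h_max] := exists_max_lower_weight e_le1.
have [g g_upper g_max] := exists_max_upper_weight e_le1.
have Omega_le : (Omega (neg_eps e) (n%:Z + r) <= Omega e n%:Z)%N by rewrite heq.
move=> x; apply: (on_optimal_chain h_lower g_upper).
have := admissible_shift_unique e_pm1 hnz Omega_le
  (admissible_shift_lower r_ub h_lower h_max) (admissible_shift_upper r_ub g_upper g_max) x.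
lia.
Qed.
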